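(* Consider an execution of algorithm $\mathcal{A}_3$ (described in the context) in an asynchronous shared-memory system of $n$ processes in which up to $t$ processes, with $n > 2t$, may crash. Let $p_i$ be a correct process that decides a value $v \ne \bot$. Then every correct process $p_j$ whose snapshot $X_j$ is strictly contained in $X_i$ does not decide $\bot$.
   Context: Model: processes communicate through an atomic snapshot object $S$ with one entry per process (initially all $\bot$), supporting $\mathrm{update}(m)$ (process $p_i$ writes $m$ into its own entry) and $\mathrm{snapshot}()$ (returns the vector of all entries), both atomic (linearizable); consequently any two snapshots returned are ordered by inclusion of their sets of non-$\bot$ entries. Asynchronous: no timing bounds. A crashed process stops taking steps; a correct process never crashes. Algorithm $\mathcal{A}_3$, code of $p_i$ with initial value $m$: $p_i$ performs $S.\mathrm{update}(m)$, then repeatedly calls $L_i := S.\mathrm{snapshot}()$ until $L_i$ has at least $n-t$ non-$\bot$ entries; it sets $X_i := L_i$ and $x_i :=$ number of non-$\bot$ entries of $X_i$. If at least $x_i - t$ entries of $X_i$ equal $m$, it decides $m$; else, if some value $v$ has at least $x_i - t$ entries in $X_i$ equal to it, it decides such a $v$; else it decides $\bot$. *)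

From mathcomp Require Import all_boot.
Set Implicit Arguments. Unset Strict Implicit. Unset Printing Implicit Defensive.

Section A3.
Variables (V : eqType) (n t : nat).

(* A snapshot vector / content of S: entry k is None (= bot) or Some value. *)
Definition snap := 'I_n -> option V.

Definition nb (X : snap) : nat := #|[pred k | X k != None]|.
Definition cnt (X : snap) (v : V) : nat := #|[pred k | X k == Some v]|.

(* The decision rule of A_3 for a process with initial value m and snapshot X;
   d = None means deciding bot.  "decides such a v" is a nondeterministic choice. *)
Definition decide_rule (m : V) (X : snap) (d : option V) : Prop :=
  let x := nb X in
  (x - t <= cnt X m -> d = Some m) /\
  (~ (x - t <= cnt X m) -> (exists v, x - t <= cnt X v) ->
      exists v, d = Some v /\ x - t <= cnt X v) /\
  (~ (x - t <= cnt X m) -> ~ (exists v, x - t <= cnt X v) -> d = None).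

Inductive local :=
| Init                          (* has not yet performed S.update(m) *)
| Scan                          (* repeatedly calling S.snapshot() *)
| Done of snap & option V.      (* X_i recorded and decision taken *)

Record config := Config { mem : snap ; pc : 'I_n -> local }.

Definition upd {A : Type} (f : 'I_n -> A) (i : 'I_n) (a : A) : 'I_n -> A :=
  fun k => if k == i then a else f k.

Definition init_config : config := Config (fun _ => None) (fun _ => Init).

(* One atomic step of process i (update or snapshot, both atomic). *)
Definition step (m : 'I_n -> V) (i : 'I_n) (c c' : config) : Prop :=
  match pc c i with
  | Init => c' = Config (upd (mem c) i (Some (m i))) (upd (pc c) i Scan)
  | Scan =>
      let L := mem c in
      if n - t <= nb L then
        exists d, decide_rule (m i) L d /\ c' = Config (mem c) (upd (pc c) i (Done L d))
      else c' = c
  | Done _ _ => c' = c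
  end.

Definition execution (m : 'I_n -> V) (sched : nat -> 'I_n) (cfg : nat -> config) : Prop :=
  cfg 0 = init_config /\ forall k, step m (sched k) (cfg k) (cfg k.+1).

(* a correct process takes infinitely many steps; a crashed one finitely many *)
Definition correct (sched : nat -> 'I_n) (j : 'I_n) : Prop :=
  forall k, exists k', k <= k' /\ sched k' = j.

Definition at_most_t_crashes (sched : nat -> 'I_n) : Prop :=
  exists F : {set 'I_n}, #|F| <= t /\ forall j, j \notin F -> correct sched j.

Definition snap_sub (X Y : snap) : Prop := forall k, X k != None -> X k = Y k.
Definition snap_strict_sub (X Y : snap) : Prop :=
  snap_sub X Y /\ exists k, X k = None /\ Y k != None.

End A3.

(* If p_i decides v != bot, then v fills at least x_i - t entries of X_i.
   Passing to a snapshot X_j contained in X_i loses at most the x_i - x_j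
   entries absent from X_j, so v still fills at least x_j - t entries of X_j,
   and the decision rule of p_j can then never reach its bot branch. *)
From mathcomp Require Import all_boot zify.

Set Implicit Arguments.
Unset Strict Implicit.

Lemma snap_sub_cnt (V : eqType) (n : nat) (X Y : snap V n) (v : V) :
  snap_sub X Y -> cnt Y v + nb X <= cnt X v + nb Y.
Proof.
(* Inclusion-exclusion on {Y = v} and {X <> bot}: their union lies in
   {Y <> bot}, their intersection in {X = v}. *)
move=> sXY; rewrite /cnt /nb -cardUI addnC.
apply: leq_add; apply/subset_leq_card/subsetP => k; rewrite !inE.
- by case/andP=> /eqP Yk /sXY->; rewrite Yk.
- by case/orP=> [/eqP->|Xk]; rewrite -?(sXY _ Xk).
Qed.

Section DecideRule.
Variables (V : eqType) (n t : nat) (m : V) (X : snap V n).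

Lemma decide_rule_Some_cnt (v : V) :
  decide_rule t m X (Some v) -> nb X - t <= cnt X v.
Proof.
move=> [dm [dw dbot]]; have [Xm|not_m] := boolP (nb X - t <= cnt X m).
  by have [->] := dm Xm.
(* The goal is boolean, so the existential needs no excluded middle. *)
apply/negPn/negP => not_v.
have no_w : ~ exists w, nb X - t <= cnt X w.
  by move/(dw (negP not_m)) => [w [[vw] Xw]]; rewrite vw Xw in not_v.
by have := dbot (negP not_m) no_w.
Qed.

Lemma decide_rule_neq_None (v : V) (d : option V) :
  nb X - t <= cnt X v -> decide_rule t m X d -> d <> None.
Proof.
move=> Xv [dm [dw _]] dN; rewrite {}dN in dm dw.
have [/dm //|not_m] := boolP (nb X - t <= cnt X m).
by have [? []] := dw (negP not_m) (ex_intro _ v Xv).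
Qed.

End DecideRule.

Lemma execution_Done_decide_rule (V : eqType) (n t : nat) (m : 'I_n -> V)
    (sched : nat -> 'I_n) (cfg : nat -> config V n) :
  execution t m sched cfg ->
  forall k p X d, pc (cfg k) p = Done X d -> decide_rule t (m p) X d.
Proof.
move=> [cfg0 hstep]; elim=> [|k IH] p X d; first by rewrite cfg0.
have := hstep k; rewrite /step.
case: (pc (cfg k) (sched k)) => [| |Y e].
- by move=> -> /=; rewrite /upd; case: (p == sched k) => //; apply: IH.
- case: ifP => _; last by move=> ->; apply: IH.
  move=> [d' [hd ->]] /=; rewrite /upd.
  by case: eqP => [-> [<- <-] //|_]; apply: IH.
- by move=> ->; apply: IH.
Qed.

Theorem lemma11 (V : eqType) (n t : nat) (hnt : 2 * t < n)
  (m : 'I_n -> V) (sched : nat -> 'I_n) (cfg : nat -> config V n)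
  (hexec : execution t m sched cfg) (hcrash : at_most_t_crashes t sched)
  (i j : 'I_n) (hi : correct sched i) (hj : correct sched j)
  (k1 k2 : nat) (Xi Xj : snap V n) (v : V) (dj : option V) :
  pc (cfg k1) i = Done Xi (Some v) ->
  pc (cfg k2) j = Done Xj dj ->
  snap_strict_sub Xj Xi ->
  dj <> None.
Proof.
move=> /(execution_Done_decide_rule hexec) /decide_rule_Some_cnt Xi_v.
move=> /(execution_Done_decide_rule hexec) rule_j [sXji _].
have Xj_v : nb Xj - t <= cnt Xj v by have := snap_sub_cnt v sXji; lia.
exact: decide_rule_neq_None Xj_v rule_j.
Qed.
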